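(* If $(X,d_X)$ is a locally finite metric space (every bounded subset is finite), then $\Delta_X^{(c)}(R)\leq R$ for all $R\in[0,\infty)$. Consequently, for every $\varepsilon>0$, every locally finite metric space $(2+\varepsilon)$-Lipschitz embeds into $c_0^+$.
   Context: For a cover $\mathcal{U}$ of $X$: $\mathrm{diam}(\mathcal{U})=\sup_{U\in\mathcal{U}}\mathrm{diam}(U)$; $\mathcal{L}(\mathcal{U})=\sup\{d\in[0,\infty): \text{every } E\subseteq X \text{ with } \mathrm{diam}(E)<d \text{ is contained in some } U\in\mathcal{U}\}$; point-finite means each point lies in only finitely many members. $\Delta_X^{(c)}(R)=\inf\{\mathrm{diam}(\mathcal{U}): \mathcal{U} \text{ point-finite cover of } X,\ \mathcal{L}(\mathcal{U})\geq R\}$. $c_0^+=\{(x_i)_{i\in\mathbb{N}}\in c_0: x_i\geq0\ \forall i\}$ with the sup-norm metric. A map $f$ is a $K$-Lipschitz embedding if it is injective and $\mathrm{Lip}(f)\cdot\mathrm{Lip}(f^{-1})\leq K$, where $\mathrm{Lip}$ denotes the Lipschitz constant. *)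

From HB Require Import structures.
From mathcomp Require Import all_boot all_order all_algebra.
From mathcomp Require Import all_classical all_reals all_analysis.
Set Implicit Arguments. Unset Strict Implicit. Unset Printing Implicit Defensive.
Import Order.TTheory GRing.Theory Num.Theory.
Import numFieldNormedType.Exports.
Local Open Scope classical_set_scope.
Local Open Scope ring_scope.

Section Defs.
Variable R : realType.
Variable X : Type.
Variable d : X -> X -> R.

Definition is_metric : Prop :=
  (forall x y, 0 <= d x y) /\ (forall x y, d x y = 0 <-> x = y) /\
  (forall x y, d x y = d y x) /\ (forall x y z, d x z <= d x y + d y z).

Definition bounded_subset (A : set X) : Prop :=
  exists M : R, forall x y, A x -> A y -> d x y <= M.

Definition locally_finite : Prop :=
  forall A : set X, bounded_subset A -> finite_set A.

(* diameter, in the extended reals; convention diam(empty) = 0 *)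
Definition diam (E : set X) : \bar R :=
  ereal_sup ([set 0%E] `|` [set (d x y)%:E | x in E & y in E]).

Definition is_cover (U : set (set X)) : Prop := \bigcup_(A in U) A = setT.

Definition point_finite (U : set (set X)) : Prop :=
  forall x, finite_set [set A | U A /\ A x].

Definition cover_diam (U : set (set X)) : \bar R :=
  ereal_sup ([set 0%E] `|` [set diam A | A in U]).

Definition lebesgue_number (U : set (set X)) : \bar R :=
  ereal_sup [set r%:E | r in [set r : R | 0 <= r /\
     forall E : set X, (diam E < r%:E)%E -> exists2 A, U A & E `<=` A]].

Definition Delta_c (r : R) : \bar R :=
  ereal_inf [set cover_diam U | U in [set U | is_cover U /\ point_finite U /\
                                      (r%:E <= lebesgue_number U)%E]].
End Defs.

Section C0.
Variable R : realType.

Definition in_c0plus (s : nat -> R) : Prop :=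
  (forall i, 0 <= s i) /\ s @ \oo --> (0 : R).

(* sup-norm distance (the sup is finite for elements of c_0) *)
Definition c0dist (s t : nat -> R) : R := sup [set `|s i - t i| | i in [set: nat]].

Definition Lip_to_c0 (X : Type) (d : X -> X -> R) (f : X -> nat -> R) : \bar R :=
  ereal_sup ([set 0%E] `|`
    [set v | exists x y, x <> y /\ v = (c0dist (f x) (f y) / d x y)%:E]).

Definition Lip_inv_to_c0 (X : Type) (d : X -> X -> R) (f : X -> nat -> R) : \bar R :=
  ereal_sup ([set 0%E] `|`
    [set v | exists x y, x <> y /\ v = (d x y / c0dist (f x) (f y))%:E]).

Definition lip_embeds_c0plus (X : Type) (d : X -> X -> R) (K : R) : Prop :=
  exists f : X -> nat -> R, (forall x, in_c0plus (f x)) /\ injective f /\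
    (Lip_to_c0 d f * Lip_inv_to_c0 d f <= K%:E)%E.
End C0.

(* For the cover bound, take all singletons together with all sets of
   diameter < r: its Lebesgue number is at least r, its members have diameter
   at most r, and it is point-finite because every member containing x is a
   subset of the closed r-ball around x, which is finite.

   For the embedding, fix a base point x0 and 0 < lam < 1, enumerate X
   injectively (it is a countable union of finite balls), and send x to the
   sequence of tents (lam d(x0, y) - d(x, y))^+ indexed by y. Every coordinate
   is 1-Lipschitz; the coordinate y = x, for x the point farther from x0, moves
   by at least lam d(x, x') / 2; and the tent at y is nonzero only if
   (1 - lam) d(x0, y) < d(x0, x), so local finiteness puts the image in c0^+.
   The distortion is 2 / lam = 2 + eps for lam = 2 / (2 + eps). *)

From mathcomp Require Import all_boot all_order all_algebra.
From mathcomp Require Import all_classical all_reals all_analysis.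
From mathcomp Require Import lra.
Set Implicit Arguments. Unset Strict Implicit. Unset Printing Implicit Defensive.
Import Order.TTheory GRing.Theory Num.Theory.
Import numFieldNormedType.Exports.
Local Open Scope classical_set_scope.
Local Open Scope ring_scope.

Lemma finite_set_subsets (T : Type) (B : set T) :
  finite_set B -> finite_set [set A : set T | A `<=` B].
Proof.
move/(@finite_seqP {classic T}) => [s Bs].
pose maskset (m : (size s).-tuple bool) : set T := [set` mask m s].
apply: (@sub_finite_set _ _ (maskset @` setT)); last first.
  by apply: finite_image; exact: finite_finset.
move=> A AB; exists (map_tuple (fun x => `[< A x >]) (in_tuple s)) => //.
rewrite /maskset /= -filter_mask; apply/seteqP; split => x /=.
  by rewrite mem_filter => /andP[/asboolP].
move=> Ax; rewrite mem_filter; apply/andP; split; first exact/asboolP.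
by have := AB x Ax; rewrite Bs.
Qed.

Lemma finite_set_nat_ub (A : set nat) :
  finite_set A -> exists N, forall n, A n -> (n < N)%N.
Proof.
move=> /finite_seqP[s As]; exists (\max_(i <- s) i).+1 => n An.
have : n \in s by move: An; rewrite As.
by move=> ns; rewrite ltnS (@leq_bigmax_seq _ _ predT id).
Qed.

Lemma cvg_finite_support (R : numFieldType) (u : nat -> R) :
  finite_set [set i | u i != 0] -> u @ \oo --> 0.
Proof.
move=> /finite_set_nat_ub[N supN]; apply: cvg_near_cst; exists N => // n /= Nn.
by apply/eqP; apply: contraTT Nn => /supN; rewrite ltnNge.
Qed.

Lemma ler_dist_max0 (R : realDomainType) (a b : R) :
  `|Num.max 0 a - Num.max 0 b| <= `|a - b|.
Proof.
have n1 := ler_norm (a - b); have n2 := ler_norm (b - a); rewrite distrC in n2.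
by have [ha|ha] := lerP a 0; have [hb|hb] := lerP b 0; rewrite ler_norml; lra.
Qed.

Section sup_norm.
Variable R : realType.
Implicit Types s t : nat -> R.

Lemma c0dist_le s t M : (forall i, `|s i - t i| <= M) -> c0dist s t <= M.
Proof.
move=> stM; apply: ge_sup; first by exists `|s 0%N - t 0%N|, 0%N.
by move=> _ [i _ <-].
Qed.

Lemma le_c0dist s t M i : (forall i, `|s i - t i| <= M) ->
  `|s i - t i| <= c0dist s t.
Proof.
move=> stM; apply: ub_le_sup; last by exists i.
by exists M => _ [j _ <-].
Qed.

Lemma Lip_mul_Lip_inv_le (X : Type) (d : X -> X -> R) (f : X -> nat -> R) K :
  0 <= K ->
  (forall x y, x <> y -> c0dist (f x) (f y) / d x y <= 1) ->
  (forall x y, x <> y -> d x y / c0dist (f x) (f y) <= K) ->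
  (Lip_to_c0 d f * Lip_inv_to_c0 d f <= K%:E)%E.
Proof.
move=> K0 lip lipinv.
have Lip_le1 : (Lip_to_c0 d f <= 1%:E)%E.
  by apply: ge_ereal_sup => v [->|[x [y [xy ->]]]]; rewrite lee_fin //; exact: lip.
have Lip_inv_leK : (Lip_inv_to_c0 d f <= K%:E)%E.
  by apply: ge_ereal_sup => v [->|[x [y [xy ->]]]]; rewrite lee_fin //; exact: lipinv.
have Lip_ge0 : (0 <= Lip_to_c0 d f)%E by apply: ereal_sup_ubound; left.
have Lip_inv_ge0 : (0 <= Lip_inv_to_c0 d f)%E by apply: ereal_sup_ubound; left.
apply: le_trans (lee_pmul Lip_ge0 Lip_inv_ge0 Lip_le1 Lip_inv_leK) _.
by rewrite -EFinM mul1r.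
Qed.

Lemma lip_embeds_c0plus_empty (X : Type) (d : X -> X -> R) K :
  0 <= K -> (X -> False) -> lip_embeds_c0plus d K.
Proof.
move=> K0 X0; exists (fun _ _ => 0); split; [|split] => [x|x|]; try by case: (X0 x).
by apply: Lip_mul_Lip_inv_le => // x; case: (X0 x).
Qed.
End sup_norm.

Section metric.
Variables (R : realType) (X : Type) (d : X -> X -> R).
Hypothesis hd : is_metric d.

Lemma metric_ge0 x y : 0 <= d x y. Proof. by case: hd. Qed.
Lemma metric_eq0 x y : (d x y = 0) <-> (x = y). Proof. by case: hd => _ []. Qed.
Lemma metric_sym x y : d x y = d y x. Proof. by case: hd => _ [_ []]. Qed.
Lemma metric_triangle x y z : d x z <= d x y + d y z.
Proof. by case: hd => _ [_ [_]]. Qed.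

Lemma metric_xx x : d x x = 0. Proof. exact/metric_eq0. Qed.

Lemma metric_gt0 x y : x <> y -> 0 < d x y.
Proof. by move=> xy; rewrite lt0r metric_ge0 andbT; apply/eqP => /metric_eq0. Qed.

Lemma diam_le (E : set X) (r : R) : 0 <= r ->
  (forall x y, E x -> E y -> d x y <= r) -> (diam d E <= r%:E)%E.
Proof.
move=> r0 Er; apply: ge_ereal_sup => _ [->|[x Ex [y Ey <-]]]; rewrite lee_fin //.
exact: Er.
Qed.

Lemma le_diam (E : set X) x y : E x -> E y -> ((d x y)%:E <= diam d E)%E.
Proof. by move=> Ex Ey; apply: ereal_sup_ubound; right; exists x => //; exists y. Qed.

Hypothesis hlf : locally_finite d.

Lemma closed_ball_finite x r : finite_set [set y | d x y <= r].
Proof.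
apply: hlf; exists (r + r) => y z /= xy xz.
by apply: le_trans (metric_triangle y x z) _; rewrite metric_sym lerD.
Qed.

Lemma locally_finite_countable (x0 : X) : countable [set: X].
Proof.
have -> : [set: X] = \bigcup_(n in [set: nat]) [set y | d x0 y <= n%:R].
  apply/seteqP; split => // y _; exists (Num.Def.archi_bound (d x0 y)) => //=.
  exact/ltW/archi_boundP/metric_ge0.
apply: bigcup_countable => [|n _]; first exact: countableP.
exact/finite_set_countable/closed_ball_finite.
Qed.

Definition small_sets_cover (r : R) : set (set X) :=
  [set A | (exists x, A = [set x]) \/ (diam d A < r%:E)%E].

Lemma small_sets_cover_is_cover r : is_cover (small_sets_cover r).
Proof. by apply/seteqP; split => // x _; exists [set x] => //; left; exists x. Qed.

Lemma small_sets_cover_point_finite r : 0 <= r -> point_finite (small_sets_cover r).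
Proof.
move=> r0 x; apply: (@sub_finite_set _ _ [set A | A `<=` [set y | d x y <= r]]).
  move=> A [[[z ->]|Ar] Ax] y Ay /=; first by move: Ax Ay => -> ->; rewrite metric_xx.
  by rewrite -lee_fin; apply: le_trans (ltW Ar); exact: le_diam.
exact/finite_set_subsets/closed_ball_finite.
Qed.

Lemma small_sets_cover_lebesgue_number r :
  0 <= r -> (r%:E <= lebesgue_number d (small_sets_cover r))%E.
Proof.
move=> r0; apply: ereal_sup_ubound; exists r => //.
by split => // E Er; exists E => //; right.
Qed.

Lemma small_sets_cover_diam r : 0 <= r -> (cover_diam d (small_sets_cover r) <= r%:E)%E.
Proof.
move=> r0; apply: ge_ereal_sup => _ [->|[A UA <-]]; first by rewrite lee_fin.
case: UA => [[x ->]|/ltW //].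
by apply: diam_le => // y z -> ->; rewrite metric_xx.
Qed.

Lemma Delta_c_le r : 0 <= r -> (Delta_c d r <= r%:E)%E.
Proof.
move=> r0; apply: le_trans (small_sets_cover_diam r0); apply: ereal_inf_lbound.
exists (small_sets_cover r) => //; split; first exact: small_sets_cover_is_cover.
split; [exact: small_sets_cover_point_finite | exact: small_sets_cover_lebesgue_number].
Qed.

Section embedding.
Variables (lam : R) (x0 : X) (h : X -> nat).
Hypotheses (lam_gt0 : 0 < lam) (lam_lt1 : lam < 1) (h_inj : injective h).

(* Indices outside the range of h go to x0, whose tent vanishes (tent_x0). *)
Definition enum_inv (i : nat) : X := @xget {classic X} x0 [set y | h y = i].

Definition tent (y x : X) : R := Num.max 0 (lam * d x0 y - d x y).

Definition tent_embedding (x : X) (i : nat) : R := tent (enum_inv i) x.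

Local Notation f := tent_embedding.

Lemma enum_invK : cancel h enum_inv.
Proof. by move=> y; apply/h_inj/(@xgetI {classic X} _ [set z | h z = h y] y). Qed.

Lemma tent_x0 x : tent x0 x = 0.
Proof.
by rewrite /tent metric_xx mulr0 sub0r; apply/max_idPl; rewrite oppr_le0 metric_ge0.
Qed.

Lemma tent_embedding_ge0 x i : 0 <= f x i.
Proof. by rewrite /f /tent le_max lexx. Qed.

Lemma tent_embedding_lipschitz x x' i : `|f x i - f x' i| <= d x x'.
Proof.
apply: le_trans (ler_dist_max0 _ _) _; set y := enum_inv i.
have := metric_triangle x' x y; have := metric_triangle x x' y.
by rewrite (metric_sym x' x) ler_norml => *; lra.
Qed.

Lemma tent_separates x x' : d x0 x' <= d x0 x ->
  lam * d x x' / 2 <= `|tent x x - tent x x'|.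
Proof.
move=> x'x; rewrite /tent metric_xx subr0 (metric_sym x' x).
have lamx0x : 0 <= lam * d x0 x by rewrite mulr_ge0 ?metric_ge0 ?ltW.
have xx'_le : d x x' <= 2 * d x0 x.
  have := metric_triangle x' x0 x; rewrite (metric_sym x' x0) (metric_sym x' x); lra.
have lam_xx'_le : lam * d x x' <= 2 * (lam * d x0 x).
  by rewrite mulrCA ler_wpM2l // ltW.
have lam_xx'_le1 : lam * d x x' <= d x x' by rewrite ler_piMl ?metric_ge0 // ltW.
rewrite (max_r lamx0x); have [_|_] := lerP (lam * d x0 x - d x x') 0.
  by rewrite subr0 ger0_norm //; lra.
by rewrite ger0_norm; have := metric_ge0 x x'; lra.
Qed.

Lemma tent_embedding_separates x x' :
  exists i, lam * d x x' / 2 <= `|f x i - f x' i|.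
Proof.
have [x'x|xx'] := lerP (d x0 x') (d x0 x).
  by exists (h x); rewrite /f enum_invK; exact: tent_separates.
exists (h x'); rewrite /f enum_invK distrC metric_sym.
exact/tent_separates/ltW.
Qed.

Lemma c0dist_tent_embedding_le x x' : c0dist (f x) (f x') <= d x x'.
Proof. by apply: c0dist_le => i; exact: tent_embedding_lipschitz. Qed.

Lemma c0dist_tent_embedding_ge x x' : lam * d x x' / 2 <= c0dist (f x) (f x').
Proof.
have [i fi] := tent_embedding_separates x x'; apply: le_trans fi _.
by apply: le_c0dist => j; exact: tent_embedding_lipschitz.
Qed.

Lemma c0dist_tent_embedding_gt0 x x' : x <> x' -> 0 < c0dist (f x) (f x').
Proof.
move=> xx'; apply: lt_le_trans (c0dist_tent_embedding_ge x x').
by rewrite divr_gt0 // mulr_gt0 // metric_gt0.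
Qed.

Lemma tent_embedding_inj : injective f.
Proof.
move=> x x' fxx'; apply: contrapT => /c0dist_tent_embedding_gt0.
by rewrite fxx' ltNge c0dist_le // => i; rewrite subrr normr0.
Qed.

Lemma tent_embedding_support x :
  [set i | f x i != 0] `<=` h @` [set y | (1 - lam) * d x0 y <= d x0 x].
Proof.
move=> i /=; rewrite /f; set y := enum_inv i => tent_neq0.
have [[z hz]|nohz] := pselect (exists z, h z = i); last first.
  suff y_x0 : y = x0 by rewrite y_x0 tent_x0 eqxx in tent_neq0.
  by apply: (@xgetPN {classic X}) => z hz; apply: nohz; exists z.
exists y; last by rewrite /y -hz enum_invK.
have : 0 < tent y x by rewrite lt0r tent_neq0 /tent le_max lexx.
rewrite /tent lt_max ltxx /= => tent_gt0.
by have := metric_triangle x0 x y; lra.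
Qed.

Lemma tent_embedding_in_c0plus x : in_c0plus (f x).
Proof.
split; first exact: tent_embedding_ge0.
apply/cvg_finite_support/(sub_finite_set (@tent_embedding_support x)).
apply: finite_image.
apply: (sub_finite_set _ (closed_ball_finite x0 (d x0 x / (1 - lam)))) => y /=.
by rewrite ler_pdivlMr ?subr_gt0 // mulrC.
Qed.

Lemma tent_embedding_distortion :
  (Lip_to_c0 d f * Lip_inv_to_c0 d f <= (2 / lam)%:E)%E.
Proof.
apply: Lip_mul_Lip_inv_le => [|x x' xx'|x x' xx'].
- by rewrite divr_ge0 // ltW.
- by rewrite ler_pdivrMr ?metric_gt0 // mul1r c0dist_tent_embedding_le.
rewrite ler_pdivrMr ?c0dist_tent_embedding_gt0 // -ler_pdivrMl ?divr_gt0 //.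
by rewrite invf_div mulrAC c0dist_tent_embedding_ge.
Qed.
End embedding.
End metric.

Theorem proposition4p1 (R : realType) (X : Type) (d : X -> X -> R)
  (hd : is_metric d) (hlf : locally_finite d) :
  (forall r : R, 0 <= r -> (Delta_c d r <= r%:E)%E) /\
  (forall eps : R, 0 < eps -> lip_embeds_c0plus d (2 + eps)).
Proof.
split=> [r|eps eps_gt0]; first exact: Delta_c_le.
have [[x0 _]|X_empty] := pselect (exists x : X, True); last first.
  by apply: lip_embeds_c0plus_empty => [|x]; [lra | apply: X_empty; exists x].
have /countable_injP[h /in2TT h_inj] := locally_finite_countable hd hlf x0.
pose lam := 2 / (2 + eps).
have lam_gt0 : 0 < lam by rewrite divr_gt0 //; lra.
have lam_lt1 : lam < 1 by rewrite ltr_pdivrMr; lra.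
have -> : 2 + eps = 2 / lam by rewrite /lam invf_div mulrCA divff ?mulr1.
exists (tent_embedding d lam x0 h); split; [|split].
- by move=> x; apply: tent_embedding_in_c0plus.
- exact: tent_embedding_inj.
- exact: tent_embedding_distortion.
Qed.
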